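(* Let $X$ be an algebraic K3 surface of Picard number $9$ with an even set of eight disjoint smooth rational curves $N_1,\dots,N_8$, let $N\subseteq NS(X)$ be the minimal primitive sublattice containing them, let $L$ generate $N^\perp\subseteq NS(X)$ with $L^2=2d>0$, $L^2\equiv 0\pmod 4$, and suppose $NS(X)\neq \mathbb{Z}L\oplus N$, so that $NS(X)$ is generated by $\mathbb{Z}L\oplus N$ and a class $\frac{L+v}{2}$ with $v\in N$. Then: (i) if $L^2\equiv 4\pmod 8$, after renumbering the $N_i$ one can take $v=-N_1-N_2$, and then $\frac{L-N_3-\dots-N_8}{2}\in NS(X)$ as well; (ii) if $L^2\equiv 0\pmod 8$, after renumbering the $N_i$ one can take $v=-(N_1+N_2+N_3+N_4)$, and then $\frac{L-N_5-N_6-N_7-N_8}{2}\in NS(X)$ as well.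
   Context: All varieties are over $\mathbb{C}$. A set of disjoint smooth rational curves $N_1,\dots,N_m$ on a smooth surface $X$ is an even set if there is $\delta\in\mathrm{Pic}(X)$ with $N_1+\dots+N_m\sim 2\delta$. The minimal primitive sublattice of $NS(X)$ containing an even set of eight disjoint smooth rational curves on a K3 surface is the Nikulin lattice $N$, generated by $N_1,\dots,N_8$ and $\hat N=\frac12\sum N_i$, with $N_i\cdot N_j=-2\delta_{ij}$. *)

(* NS(X) is modelled abstractly as a free Z-module of rank 9
   (a zmodType with a Z-basis) carrying a symmetric Z-bilinear even form. *)
From mathcomp Require Import all_boot all_order all_algebra all_fingroup.
Set Implicit Arguments. Unset Strict Implicit. Unset Printing Implicit Defensive.
Import Order.TTheory GRing.Theory Num.Theory.
Local Open Scope ring_scope.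

Definition is_Zbasis (M : zmodType) (n : nat) (e : 'I_n -> M) : Prop :=
  (forall x : M, exists k : 'I_n -> int, x = \sum_(i < n) e i *~ k i) /\
  (forall k : 'I_n -> int, \sum_(i < n) e i *~ k i = 0 -> forall i, k i = 0).

Definition in_Zspan (M : zmodType) (n : nat) (f : 'I_n -> M) (x : M) : Prop :=
  exists k : 'I_n -> int, x = \sum_(i < n) f i *~ k i.

(* saturation of the span of the f i, i.e. the minimal primitive sublattice
   containing them *)
Definition sat_span (M : zmodType) (n : nat) (f : 'I_n -> M) (x : M) : Prop :=
  exists m : nat, (0 < m)%N /\ in_Zspan f (x *+ m).

Definition nikulin_span (M : zmodType) (Nc : 'I_8 -> M) (Nhat : M) (x : M) : Prop :=
  exists (k : 'I_8 -> int) (c : int), x = \sum_(i < 8) Nc i *~ k i + Nhat *~ c.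

Definition perp (M : zmodType) (b : M -> M -> int) (P : M -> Prop) (x : M) : Prop :=
  forall y, P y -> b x y = 0.

Definition generated_with_half (M : zmodType) (P : M -> Prop) (L v : M) : Prop :=
  exists w : M, w *+ 2 = L + v /\
    forall x : M, exists (k c : int) (n : M), P n /\ x = L *~ k + n + w *~ c.

Definition generated_by (M : zmodType) (P : M -> Prop) (L : M) : Prop :=
  forall x : M, exists (k : int) (n : M), P n /\ x = L *~ k + n.

(* Write the class generating NS over ZL (+) N as w with 2w = L + v, v in the
   Nikulin lattice.  Pairing with N_1 shows that the coefficient of Nhat in v is
   even, so v = sum x_i N_i with integers x_i.  Subtracting from w twice an
   integral combination of the N_i gives the class (L - N_S)/2, where S is the set
   of indices with x_i odd and N_S = sum_(i in S) N_i; adding N_S - Nhat gives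
   (L - N_(S^c))/2.  Expanding 4 w^2 = L^2 + v^2 = L^2 - 2 sum x_i^2, with w^2 even
   and x^2 = [x odd] (mod 4), yields L^2 = 2 |S| (mod 8).  Neither S nor its
   complement is empty, because L/2 is not in NS (it would lie in N^perp = ZL).
   So |S| or |S^c| equals 2 when L^2 = 4 (mod 8), and |S| = 4 when L^2 = 0
   (mod 8); renumbering the N_i to put that set first gives the statement. *)

From mathcomp Require Import all_boot all_order all_algebra all_fingroup.
From mathcomp Require Import zify ring.
Import Order.TTheory GRing.Theory Num.Theory.

Lemma perm_front {n : nat} (A : {set 'I_n}) :
  exists s : 'S_n, forall i, (s i \in A) = (i < #|A|)%N.
Proof.
have hp : perm_eq (enum A ++ enum (~: A)) (ord_tuple n).
  rewrite val_ord_tuple; apply: uniq_perm; rewrite ?cat_uniq ?enum_uniq ?andbT //=.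
    by apply/hasPn => i; rewrite !mem_enum in_setC => /negbTE ->.
  by move=> i; rewrite mem_cat !mem_enum in_setC orbN.
case/tuple_permP: hp => s def_s; exists s => i.
have := congr1 (fun t => nth i t i) def_s.
rewrite /= (nth_map i) ?size_enum_ord // nth_ord_enum tnth_ord_tuple => <-.
rewrite nth_cat -cardE; case: ltnP => [lt_iA | le_Ai].
  by rewrite -mem_enum mem_nth // -cardE.
have : nth i (enum (~: A)) (i - #|A|) \in ~: A.
  by rewrite -mem_enum mem_nth // ltn_subLR // -cardE cardsC card_ord.
by rewrite in_setC => /negbTE.
Qed.

Local Open Scope ring_scope.

Lemma perm_front_sum {V : nmodType} {n : nat} (A : {set 'I_n}) (F : 'I_n -> V) :
  exists s : 'S_n,
    \sum_(i < n | (i < #|A|)%N) F (s i) = \sum_(i in A) F i /\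
    \sum_(i < n | (#|A| <= i)%N) F (s i) = \sum_(i in ~: A) F i.
Proof.
have [s sA] := perm_front A; exists s.
by split; rewrite [RHS](reindex_inj (@perm_inj _ s)); apply: eq_bigl => i;
  rewrite ?in_setC sA // -leqNgt.
Qed.

Lemma big_ord_lt2 {V : nmodType} {n : nat} (F : 'I_n.+2 -> V) :
  \sum_(i < n.+2 | (i < 2)%N) F i = F (inord 0) + F (inord 1).
Proof.
rewrite big_mkcond !big_ord_recl /= big1_eq addr0.
by congr (F _ + F _); apply/val_inj; rewrite /= inordK.
Qed.

Section AdditiveMaps.
Context {M V : zmodType}.
Variable f : M -> V.
Hypothesis fD : {morph f : x y / x + y}.

Lemma additive0 : f 0 = 0.
Proof. by apply: (addrI (f 0)); rewrite -fD !addr0. Qed.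

Lemma additiveN x : f (- x) = - f x.
Proof. by apply: (addrI (f x)); rewrite -fD !subrr additive0. Qed.

Lemma additiveMn x n : f (x *+ n) = f x *+ n.
Proof. by elim: n => [|n IHn]; rewrite ?additive0 // !mulrS fD IHn. Qed.

Lemma additiveMz x m : f (x *~ m) = f x *~ m.
Proof. by case: m => n; rewrite ?NegzE ?mulrNz ?additiveN -pmulrn additiveMn. Qed.

Lemma additive_sum (I : Type) (r : seq I) (P : pred I) (F : I -> M) :
  f (\sum_(i <- r | P i) F i) = \sum_(i <- r | P i) f (F i).
Proof. exact: (big_morph f fD additive0). Qed.

End AdditiveMaps.

Section NikulinSpan.
Context {M : zmodType}.
Variables (Nc : 'I_8 -> M) (Nhat : M).

Lemma nikulin_spanD x y :
  nikulin_span Nc Nhat x -> nikulin_span Nc Nhat y -> nikulin_span Nc Nhat (x + y).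
Proof.
move=> [k [c ->]] [k' [c' ->]]; exists (fun i => k i + k' i), (c + c').
rewrite mulrzDr addrACA -big_split; congr (_ + _).
by apply: eq_bigr => i _; rewrite mulrzDr.
Qed.

Lemma nikulin_spanMz x m : nikulin_span Nc Nhat x -> nikulin_span Nc Nhat (x *~ m).
Proof.
move=> [k [c ->]]; exists (fun i => k i * m), (c * m).
rewrite mulrzDl mulrz_suml mulrzA; congr (_ + _).
by apply: eq_bigr => i _; rewrite mulrzA.
Qed.

Lemma nikulin_span_comb (a : 'I_8 -> int) : nikulin_span Nc Nhat (\sum_i Nc i *~ a i).
Proof. by exists a, 0; rewrite mulr0z addr0. Qed.

Lemma nikulin_span_Nc j : nikulin_span Nc Nhat (Nc j).
Proof.
exists (fun i => (i == j)%:Z), 0; rewrite mulr0z addr0 (bigD1 j) // big1 => [|i /negbTE nij].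
  by rewrite /= eqxx mulr1z addr0.
by rewrite nij mulr0z.
Qed.

End NikulinSpan.

Definition odd_set {n : nat} (x : 'I_n -> int) : {set 'I_n} := [set i | ~~ (2 %| x i)%Z].

Lemma sum_odd_set {M : zmodType} {n : nat} (f : 'I_n -> M) (x : 'I_n -> int) :
  \sum_i f i *~ x i + \sum_(i in odd_set x) f i = (\sum_i f i *~ ((x i + 1) %/ 2)%Z) *+ 2.
Proof.
rewrite -sumrMnl [\sum_(i in _) _]big_mkcond -big_split; apply: eq_bigr => i _.
rewrite /= inE [RHS]mulr2n -mulrzDr; case: ifP => odd_xi.
  by rewrite -{2}(mulr1z (f i)) -mulrzDr; congr (_ *~ _); lia.
by rewrite addr0; congr (_ *~ _); lia.
Qed.

Lemma sqrz_mod4 (y : int) : (4 %| y ^+ 2 - (if ~~ (2 %| y)%Z then 1 else 0))%Z.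
Proof.
pose q := (y %/ 2)%Z; case: ifP => odd_y; apply/dvdzP.
  have -> : y = q * 2 + 1 by rewrite /q; lia.
  by exists (q ^+ 2 + q); ring.
have -> : y = q * 2 by rewrite /q; lia.
by exists (q ^+ 2); ring.
Qed.

Lemma sum_sqr_odd_set {n : nat} (x : 'I_n -> int) :
  (4 %| \sum_i x i ^+ 2 - #|odd_set x|%:Z)%Z.
Proof.
rewrite -sum1_card -natz natr_sum [\sum_(i in _) _]big_mkcond /= -sumrB.
apply: (big_ind (fun t => 4 %| t)%Z) => [|u v|i _]; [exact: rpred0 | exact: rpredD | ].
by rewrite inE mulr1n; apply: sqrz_mod4.
Qed.

Section SymmetricForm.
Context {M : zmodType} {b : M -> M -> int}.
Hypothesis bDl : forall x y z, b (x + y) z = b x z + b y z.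

Lemma bMzl x y m : b (x *~ m) y = b x y * m.
Proof. by rewrite (additiveMz (b^~ y)) ?mulrzz // => u v; apply: bDl. Qed.

Lemma bMnl x y n : b (x *+ n) y = b x y * n%:Z.
Proof. by rewrite pmulrn bMzl. Qed.

Lemma b_suml (I : Type) (r : seq I) (P : pred I) (F : I -> M) y :
  b (\sum_(i <- r | P i) F i) y = \sum_(i <- r | P i) b (F i) y.
Proof. by rewrite (additive_sum (b^~ y)) // => u v; apply: bDl. Qed.

Lemma perp_generator_not_halvable {P : M -> Prop} {L : M} :
    (forall x, perp b P x <-> exists k, x = L *~ k) -> b L L != 0 ->
  ~ exists u, u *+ 2 = L.
Proof.
move=> perpL bLL_neq0 [u u2].
have perpLL : perp b P L by apply/perpL; exists 1; rewrite mulr1z.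
have : perp b P u by move=> y /perpLL; rewrite -u2 bMnl; lia.
case/perpL=> m um.
have bLL : b L L = b L L * (m * 2) by rewrite -{1}u2 um pmulrn -mulrzA bMzl.
have /eqP : b L L * (m * 2 - 1) = 0 by rewrite mulrBr mulr1 -bLL subrr.
by rewrite mulf_eq0 (negbTE bLL_neq0) /=; lia.
Qed.

Context {Nc : 'I_8 -> M} {Nhat : M}.
Hypothesis bN : forall i j, b (Nc i) (Nc j) = if i == j then -2 else 0.
Hypothesis Nhat2 : Nhat *+ 2 = \sum_i Nc i.

Lemma b_comb_Nc (a : 'I_8 -> int) j : b (\sum_i Nc i *~ a i) (Nc j) = - 2 * a j.
Proof.
rewrite b_suml (bigD1 j) // big1 => [|i /negbTE nij]; last by rewrite bMzl bN nij mul0r.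
by rewrite /= addr0 bMzl bN eqxx mulrC.
Qed.

Lemma b_Nhat_Nc j : b Nhat (Nc j) = -1.
Proof.
have := b_comb_Nc (fun=> 1) j.
rewrite (eq_bigr _ (fun i _ => mulr1z (Nc i))) -Nhat2 bMnl; lia.
Qed.

Lemma nikulin_span_half_comb {L v w : M} {j : 'I_8} :
    b L (Nc j) = 0 -> nikulin_span Nc Nhat v -> w *+ 2 = L + v ->
  exists a, v = \sum_i Nc i *~ a i.
Proof.
move=> bLN [k [c def_v]] w2.
have : (2 %| b v (Nc j))%Z.
  have := congr1 (b^~ (Nc j)) w2; rewrite /= bMnl bDl bLN add0r => <-.
  by apply/dvdzP; exists (b w (Nc j)).
rewrite def_v bDl b_comb_Nc bMzl b_Nhat_Nc => even_v.
have /dvdzP [c' def_c] : (2 %| c)%Z by lia.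
exists (fun i => k i + c'); rewrite def_c (mulrC c') mulrzA -pmulrn Nhat2.
by rewrite mulrz_suml -big_split; apply: eq_bigr => i _; rewrite mulrzDr.
Qed.

Hypothesis b_sym : forall x y, b x y = b y x.

Lemma bDr x y z : b x (y + z) = b x y + b x z.
Proof. by rewrite !(b_sym x) bDl. Qed.

Lemma b_sqrD x y : b (x + y) (x + y) = b x x + b x y * 2 + b y y.
Proof. by rewrite bDl !bDr (b_sym y x); ring. Qed.

Lemma b_sqrMn2 x : b (x *+ 2) (x *+ 2) = b x x * 4.
Proof. by rewrite bMnl b_sym bMnl; ring. Qed.

Lemma b_comb_Nc_sqr (a : 'I_8 -> int) :
  b (\sum_i Nc i *~ a i) (\sum_i Nc i *~ a i) = - 2 * \sum_i a i ^+ 2.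
Proof.
rewrite b_suml mulr_sumr; apply: eq_bigr => j _.
by rewrite bMzl b_sym b_comb_Nc; ring.
Qed.

Hypothesis b_even : forall x, (2 %| b x x)%Z.

Lemma card_odd_set_mod8 {L w : M} {x : 'I_8 -> int} :
    b L (\sum_i Nc i *~ x i) = 0 -> w *+ 2 = L + \sum_i Nc i *~ x i ->
  (8 %| b L L - 2 * #|odd_set x|%:Z)%Z.
Proof.
move=> bLv w2; have := b_sqrMn2 w; rewrite w2 b_sqrD bLv b_comb_Nc_sqr.
have [t ->] := dvdzP (b_even w); have [u] := dvdzP (sum_sqr_odd_set x).
lia.
Qed.

End SymmetricForm.

Definition generates_with {M : zmodType} (P : M -> Prop) (L w : M) : Prop :=
  forall x, exists (k c : int) (n : M), P n /\ x = L *~ k + n + w *~ c.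

Lemma generates_with_shift {M : zmodType} {P : M -> Prop} {L w z : M} :
    (forall x y, P x -> P y -> P (x + y)) -> (forall x m, P x -> P (x *~ m)) ->
    P (w - z) -> generates_with P L w -> generates_with P L z.
Proof.
move=> PD PMz Pwz gen_w y; have [k [c [n [Pn ->]]]] := gen_w y.
exists k, c, (n + (w - z) *~ c); split; first exact: PD Pn (PMz _ _ Pwz).
by rewrite mulrzBl !addrA addrNK.
Qed.

Definition half_class {M : zmodType} (Nc : 'I_8 -> M) (Nhat L w : M) (A : {set 'I_8}) : Prop :=
  exists z, z *+ 2 = L - \sum_(i in A) Nc i /\ nikulin_span Nc Nhat (w - z).

Section HalfClasses.
Context {M : zmodType} {Nc : 'I_8 -> M} {Nhat L w : M}.

Lemma half_class_odd_set {x : 'I_8 -> int} :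
  w *+ 2 = L + \sum_i Nc i *~ x i -> half_class Nc Nhat L w (odd_set x).
Proof.
move=> w2; exists (w - \sum_i Nc i *~ ((x i + 1) %/ 2)%Z); split.
  by rewrite mulrnBl -sum_odd_set w2 opprD addrA addrK.
by rewrite subKr; apply: nikulin_span_comb.
Qed.

Lemma half_class_card_gt0 {A : {set 'I_8}} :
  ~ (exists u, u *+ 2 = L) -> half_class Nc Nhat L w A -> (0 < #|A|)%N.
Proof.
move=> L_not_halvable [z [z2 _]]; rewrite lt0n cards_eq0; apply/negP => /eqP A0.
by apply: L_not_halvable; exists z; rewrite z2 A0 big_set0 subr0.
Qed.

Hypothesis Nhat2 : Nhat *+ 2 = \sum_i Nc i.

Lemma half_class_setC {A : {set 'I_8}} :
  half_class Nc Nhat L w A -> half_class Nc Nhat L w (~: A).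
Proof.
case=> z [z2 nik_wz]; exists (z - (Nhat - \sum_(i in A) Nc i)); split.
  rewrite mulrnBl mulrnBl z2 Nhat2 [\sum_i Nc i](bigID (mem A)) /=.
  under [X in _ = L - X]eq_bigl do rewrite in_setC.
  by rewrite mulr2n opprB addrKA addrA addrNK.
rewrite (opprB z) addrA (addrAC w); apply: nikulin_spanD => //.
exists (fun i => - (i \in A)%:Z), 1; rewrite mulr1z [RHS]addrC; congr (_ + _).
rewrite -sumrN big_mkcond; apply: eq_bigr => i _.
by case: (i \in A); rewrite ?mulrN1z ?oppr0 ?mulr0z.
Qed.

Context {P : M -> Prop}.
Hypothesis hP : forall x, P x <-> nikulin_span Nc Nhat x.
Hypothesis gen_w : generates_with P L w.

Lemma half_class_renumber {A : {set 'I_8}} : half_class Nc Nhat L w A ->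
  exists s : 'S_8,
    generated_with_half P L (- \sum_(i < 8 | (i < #|A|)%N) Nc (s i)) /\
    exists z, z *+ 2 = L - \sum_(i < 8 | (#|A| <= i)%N) Nc (s i).
Proof.
move=> hA; have [s [sumA sumAC]] := perm_front_sum A Nc.
exists s; rewrite sumA sumAC; split.
  have [z [z2 /hP P_wz]] := hA; exists z; split; first exact: z2.
  apply: generates_with_shift P_wz gen_w => [x y /hP nx /hP ny | x m /hP nx];
    apply/hP; [exact: nikulin_spanD | exact: nikulin_spanMz].
by have [z [z2 _]] := half_class_setC hA; exists z.
Qed.

End HalfClasses.

Theorem corollary3p4
  (NS : zmodType) (b : NS -> NS -> int)
  (hb_add : forall x y z : NS, b (x + y) z = b x z + b y z)
  (hb_sym : forall x y : NS, b x y = b y x)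
  (heven : forall x : NS, (2 %| b x x)%Z)
  (hrank : exists e : 'I_9 -> NS, is_Zbasis e)
  (Nc : 'I_8 -> NS)
  (hN : forall i j : 'I_8, b (Nc i) (Nc j) = if i == j then -2 else 0)
  (Nhat : NS) (hNhat : Nhat *+ 2 = \sum_(i < 8) Nc i)
  (hnik : forall x : NS, sat_span Nc x <-> nikulin_span Nc Nhat x)
  (L : NS) (d : int)
  (hL : forall x : NS, perp b (sat_span Nc) x <-> exists k : int, x = L *~ k)
  (hL2 : b L L = 2 * d) (hd : 0 < d) (hL4 : (4 %| b L L)%Z)
  (hne : ~ generated_by (sat_span Nc) L)
  (hgen : exists v : NS, sat_span Nc v /\ generated_with_half (sat_span Nc) L v) :
  ((b L L %% 8)%Z = 4 ->
     exists s : 'S_8,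
       generated_with_half (sat_span Nc) L (- (Nc (s (inord 0)) + Nc (s (inord 1))))
       /\ exists w : NS, w *+ 2 = L - \sum_(i < 8 | (2 <= i)%N) Nc (s i))
  /\
  ((b L L %% 8)%Z = 0 ->
     exists s : 'S_8,
       generated_with_half (sat_span Nc) L (- \sum_(i < 8 | (i < 4)%N) Nc (s i))
       /\ exists w : NS, w *+ 2 = L - \sum_(i < 8 | (4 <= i)%N) Nc (s i)).
Proof.
(* [hrank], [hL4] and [hne] are not needed: the two cases already fix L^2 mod 8,
   and [hL] with L^2 <> 0 excludes L/2 from NS. *)
have Lperp y : sat_span Nc y -> b L y = 0 by apply: (hL L).2; exists 1; rewrite mulr1z.
have L_not_halvable : ~ exists u, u *+ 2 = L.
  by apply: (perp_generator_not_halvable hb_add hL); rewrite hL2; lia.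
case: hgen => v [Pv [w [w2 gen_w]]].
have LN0 : b L (Nc ord0) = 0 by apply/Lperp/hnik/nikulin_span_Nc.
have [x def_v] := nikulin_span_half_comb hb_add hN hNhat LN0 ((hnik v).1 Pv) w2.
rewrite {}def_v in w2 Pv.
have hS := half_class_odd_set (Nhat := Nhat) w2.
have := card_odd_set_mod8 hb_add hN hb_sym heven (Lperp _ Pv) w2.
move: (odd_set x) hS => S hS cardS.
have hSC := half_class_setC hNhat hS.
have S_gt0 := half_class_card_gt0 L_not_halvable hS.
have SC_gt0 := half_class_card_gt0 L_not_halvable hSC.
have cardSC : (#|S| + #|~: S|)%N = 8%N by rewrite cardsC card_ord.
have renumber := half_class_renumber hNhat hnik gen_w.
split=> L2_mod8.
  have [S2 | SC2] : #|S| = 2%N \/ #|~: S| = 2%N by lia.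
    have [s [gen_s half_s]] := renumber _ hS.
    by exists s; rewrite S2 big_ord_lt2 in gen_s; rewrite S2 in half_s.
  have [s [gen_s half_s]] := renumber _ hSC.
  by exists s; rewrite SC2 big_ord_lt2 in gen_s; rewrite SC2 in half_s.
have S4 : #|S| = 4%N by lia.
by have := renumber _ hS; rewrite S4.
Qed.
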